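(* Let $d\ge1$ and $\alpha\in(1/2,1)$. Then there exist two absolutely continuous probability measures $\mu_1,\mu_2$ on $\mathbb R^d$ such that there is no convex set $C\subset\mathbb R^d$ with $\mu_1(C)=\mu_2(C)=\alpha$. *)

From HB Require Import structures.
From mathcomp Require Import all_boot all_order all_algebra.
From mathcomp Require Import all_classical all_reals all_analysis.
Set Implicit Arguments. Unset Strict Implicit. Unset Printing Implicit Defensive.
Import Order.TTheory GRing.Theory Num.Theory.
Local Open Scope classical_set_scope.
Local Open Scope ring_scope.

(* R^d is modelled as d.-tuple R, carrying the product (= Borel) sigma-algebra
   provided by MathComp-Analysis (measurable_structure.v, measurable_tuple). *)

Definition box (R : realType) (d : nat) (a b : d.-tuple R) : set (d.-tuple R) :=
  [set x | forall i : 'I_d, tnth a i <= tnth x i <= tnth b i].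

Definition box_vol (R : realType) (d : nat) (a b : d.-tuple R) : R :=
  \prod_(i < d) Num.max 0 (tnth b i - tnth a i).

Definition lebesgue_null (R : realType) (d : nat) (N : set (d.-tuple R)) : Prop :=
  forall eps : R, 0 < eps ->
    exists a b : nat -> d.-tuple R,
      N `<=` \bigcup_k box (a k) (b k) /\
      (\sum_(0 <= k <oo) (box_vol (a k) (b k))%:E <= eps%:E)%E.

Definition abs_continuous (R : realType) (d : nat)
    (mu : probability (d.-tuple R) R) : Prop :=
  forall N : set (d.-tuple R), measurable N -> lebesgue_null N -> mu N = 0%E.

Definition convex_tuple_set (R : realType) (d : nat) (C : set (d.-tuple R)) : Prop :=
  forall (x y : d.-tuple R) (t : R), C x -> C y -> 0 <= t <= 1 ->
    C [tuple (1 - t) * tnth x i + t * tnth y i | i < d].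

From HB Require Import structures.
From mathcomp Require Import all_boot all_order all_algebra.
From mathcomp Require Import all_classical all_reals all_analysis.
From mathcomp Require Import measurable_realfun lra ring.
Import Order.TTheory GRing.Theory Num.Theory.
Local Open Scope classical_set_scope.
Local Open Scope ring_scope.
Set Implicit Arguments. Unset Strict Implicit. Unset Printing Implicit Defensive.

(* Let mu1 be uniform on the unit cube Q = [0,1]^d, and mu2 the uniform
   mixture, over the points c of the lattice {-m, -m+2, ..., m}^d, of the
   uniform laws on c + Q and c - Q.  A convex C with mu1(C) = alpha > 1/2 must
   miss some vertex s of Q (otherwise Q is inside C), hence is disjoint from
   its reflection D through s, and mu2(C) + mu2(D) <= 1.  The reflection
   through s maps the pair c +- Q to the pair at 2s - c, and 2s minus the
   lattice is a translate of the lattice sharing m^d of its (m+1)^d points, so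
   mu2(D) >= mu2(C) - (1 - (m/(m+1))^d).  Hence
   mu2(C) <= 1 - (m/(m+1))^d / 2 < alpha once m is large. *)

Lemma bernoulli_ineq (R : realDomainType) (x : R) n :
  -1 <= x -> 1 + n%:R * x <= (1 + x) ^+ n.
Proof.
move=> x_ge; elim: n => [|n IH]; first by rewrite mul0r addr0 expr0.
have x1_ge0 : 0 <= 1 + x by rewrite -lerBlDl sub0r.
rewrite exprSr; apply: le_trans (ler_wpM2r x1_ge0 IH).
have : 0 <= n%:R * x ^+ 2 by rewrite mulr_ge0 ?ler0n ?sqr_ge0.
have -> : (1 + n%:R * x) * (1 + x) = 1 + n.+1%:R * x + n%:R * x ^+ 2.
  by rewrite -natr1; ring.
by rewrite lerDl.
Qed.

Lemma exists_ratio_expn_gt (R : archiRealFieldType) (d : nat) (e : R) :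
  0 < e -> exists m : nat, 1 - e < (m%:R / m.+1%:R) ^+ d.
Proof.
move=> e_gt0; exists (Num.truncn (d%:R / e)).
set m := Num.truncn _; set y := m.+1%:R.
have y_gt0 : 0 < y by rewrite ltr0n.
have d_lt : d%:R / e < y by exact: truncnS_gt.
have -> : m%:R / y = 1 + - y^-1.
  by rewrite /y -natr1; field; rewrite natr1 pnatr_eq0.
apply: lt_le_trans (bernoulli_ineq _ _); last first.
  by rewrite lerNr opprK invf_le1 // /y ler1n.
by rewrite mulrN ltrD2l ltrN2 ltr_pdivrMr // mulrC -ltr_pdivrMr.
Qed.

Lemma probability_fineK d (T : measurableType d) (R : realType)
    (P : probability T R) (A : set T) :
  measurable A -> (fine (P A))%:E = P A.
Proof. by move=> mA; rewrite fineK// fin_num_measure. Qed.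

Lemma fine_probability_ge0_le1 d (T : measurableType d) (R : realType)
    (P : probability T R) (A : set T) :
  measurable A -> 0 <= fine (P A) <= 1.
Proof.
by move=> mA; rewrite -!lee_fin probability_fineK// measure_ge0 probability_le1.
Qed.

Section pushforward_probability.
Local Open Scope ereal_scope.
Context d1 d2 (T1 : measurableType d1) (T2 : measurableType d2) (R : realType).
Variables (P : probability T1 R) (f : T1 -> T2) (mf : measurable_fun setT f).

(* The measurability proof is an argument so that the probability instance
   below can depend on it. *)
Definition pushforward_prob of measurable_fun setT f := pushforward P f.

Local Notation Pf := (pushforward_prob mf).

Let pushforward_prob0 : Pf set0 = 0.
Proof. exact: measure0 (pushforward P f). Qed.

Let pushforward_prob_ge0 A : 0 <= Pf A.
Proof. exact: measure_ge0 (pushforward P f) A. Qed.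

Let pushforward_prob_sigma_additive : semi_sigma_additive Pf.
Proof. exact: (@measure_semi_sigma_additive _ _ _ (pushforward P f)). Qed.

HB.instance Definition _ := isMeasure.Build _ _ _ Pf
  pushforward_prob0 pushforward_prob_ge0 pushforward_prob_sigma_additive.

Let pushforward_prob_setT : Pf setT = 1.
Proof. by rewrite /pushforward_prob /pushforward preimage_setT probability_setT. Qed.

HB.instance Definition _ := Measure_isProbability.Build _ _ _ Pf pushforward_prob_setT.

Lemma pushforward_probE A : (Pf : probability T2 R) A = P (f @^-1` A).
Proof. by []. Qed.

End pushforward_probability.

Section uniform_mixture.
Local Open Scope ereal_scope.
Context d (T : measurableType d) (R : realType) (I : finType).
Variables (P : I -> probability T R) (i0 : I).

(* The argument of type I witnesses that I is nonempty, which is needed for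
   the total mass to be 1. *)
Definition uniform_mixture of I := fun A : set T =>
  (#|I|%:R^-1)%:E * \sum_(i : I) P i A.

Local Notation mixture := (uniform_mixture i0).

Let mixture0 : mixture set0 = 0.
Proof. by rewrite /uniform_mixture big1 ?mule0// => i _; rewrite measure0. Qed.

Let mixture_ge0 A : 0 <= mixture A.
Proof. by rewrite mule_ge0// ?lee_fin ?invr_ge0// sume_ge0. Qed.

Let mixture_sigma_additive : semi_sigma_additive mixture.
Proof.
move=> F mF tF mUF; rewrite /uniform_mixture.
rewrite (_ : (fun n => _) = (fun n => (#|I|%:R^-1)%:E *
    \sum_(0 <= k < n) \sum_(i : I) P i (F k))); last first.
  by apply/funext => n; rewrite ge0_sume_distrr// => k _; exact: sume_ge0.
apply: cvgeZl => //=.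
rewrite [X in _ --> X](_ : _ =
    lim ((fun n => \sum_(0 <= k < n) \sum_(i : I) P i (F k)) @ \oo)).
  by apply: is_cvg_ereal_nneg_natsum => k _; exact: sume_ge0.
rewrite nneseries_sum//; apply: eq_bigr => i _.
exact: measure_semi_bigcup.
Qed.

HB.instance Definition _ := isMeasure.Build _ _ _ mixture
  mixture0 mixture_ge0 mixture_sigma_additive.

Let mixture_setT : mixture setT = 1.
Proof.
rewrite /uniform_mixture (eq_bigr (fun=> 1)) => [|i _]; last exact: probability_setT.
rewrite sumEFin sumr_const -EFinM mulVf// pnatr_eq0 -lt0n.
by apply/card_gt0P; exists i0.
Qed.

HB.instance Definition _ :=
  Measure_isProbability.Build _ _ _ mixture mixture_setT.

Lemma uniform_mixtureE A :
  (mixture : probability T R) A = (#|I|%:R^-1)%:E * \sum_(i : I) P i A.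
Proof. by []. Qed.

Lemma uniform_mixture_fineE A : measurable A ->
  (mixture : probability T R) A = (#|I|%:R^-1 * \sum_(i : I) fine (P i A))%:E.
Proof.
move=> mA; rewrite uniform_mixtureE EFinM -sumEFin; congr (_ * _).
by apply: eq_bigr => i _; rewrite probability_fineK.
Qed.

Lemma uniform_mixture_le A (v : R) : measurable A ->
  (forall i, P i A <= v%:E) -> (mixture : probability T R) A <= v%:E.
Proof.
move=> mA Pv; rewrite uniform_mixture_fineE// lee_fin ler_pdivrMl; last first.
  by rewrite ltr0n; apply/card_gt0P; exists i0.
apply: le_trans (_ : \sum_(i : I) v <= _)%R; last by rewrite sumr_const mulr_natl.
by apply: ler_sum => i _; rewrite -lee_fin probability_fineK.
Qed.

End uniform_mixture.

Lemma measurable_box (R : realType) n (a b : n.-tuple R) : measurable (box a b).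
Proof.
rewrite (_ : box a b = \bigcap_(i in [set: 'I_n])
    ((fun x : n.-tuple R => tnth x i) @^-1` `[tnth a i, tnth b i])).
  apply: fin_bigcap_measurable; first exact: finite_finset.
  by move=> i _; rewrite -[X in measurable X]setTI; exact: measurable_tnth.
apply/seteqP; split => x /= h i; first by move=> _; rewrite /= in_itv; exact: h.
by have := h i I; rewrite /= in_itv.
Qed.

Section uniform_cube.
Variable R : realType.
Local Open Scope ereal_scope.

(* uniform_prob lives on the Lebesgue-measurable copy of R; the identity
   transports it to R. *)
Let measurable_borel_id : measurable_fun [set: measurableTypeR R] (id : _ -> R).
Proof. by move=> _ A mA; rewrite setTI. Qed.

Definition unif01 : probability R R :=
  pushforward_prob (uniform_prob (@ltr01 R)) measurable_borel_id.

Lemma unif01_itv_le (a b : R) :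
  unif01 `[a, b]%classic <= (Num.max 0 (b - a))%:E.
Proof.
rewrite /unif01 /pushforward_prob /pushforward /uniform_prob.
apply: (@le_trans _ _ (\int[lebesgue_measure]_(x in `[a, b]%classic) (cst 1%:E) x)).
  apply: ge0_le_integral => //.
  - exact: measurable_itv.
  - by move=> x _; rewrite lee_fin uniform_pdf_ge0.
  - by apply/measurable_EFinP/measurable_funTS; exact: measurable_uniform_pdf.
  - by move=> x _; rewrite lee_fin /uniform_pdf subr0 invr1; case: ifP.
rewrite integral_cst// mul1e.
rewrite [X in X <= _](_ : _ = lebesgue_measure (`[a, b]%classic : set R))//.
rewrite lebesgue_measure_itv/= lte_fin.
by case: ifPn => _; rewrite lee_fin le_max lexx ?orbT.
Qed.

Lemma unif01_unit_itv : unif01 `[0%R, 1%R]%classic = 1.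
Proof. exact: integral_uniform_pdf1. Qed.

Let measurable_cons_tuple n :
  measurable_fun setT (fun p : R * n.-tuple R => [tuple of p.1 :: p.2]).
Proof. exact: measurable_cons. Qed.

Fixpoint unif_cube n : probability (n.-tuple R) R :=
  match n with
  | 0 => @dirac _ _ [tuple] R
  | n.+1 => pushforward_prob (unif01 \x unif_cube n) (@measurable_cons_tuple n)
  end.

Lemma unif_cubeS n (A : set (n.+1.-tuple R)) : unif_cube n.+1 A =
  (unif01 \x unif_cube n) ((fun p : R * n.-tuple R => [tuple of p.1 :: p.2]) @^-1` A).
Proof. by []. Qed.

Lemma unif_cube_box n (a b : n.-tuple R) : unif_cube n (box a b) =
  (\prod_(i < n) fine (unif01 `[tnth a i, tnth b i]%classic))%:E.
Proof.
elim: n a b => [|n IH] a b; first by rewrite /= big_ord0 diracE mem_set// => -[].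
have cons_eta (c : n.+1.-tuple R) : exists c0 (c' : n.-tuple R), c = [tuple of c0 :: c'].
  by exists (thead c), [tuple of behead c]; exact: tuple_eta.
have [a0 [{}a ->]] := cons_eta a; have [b0 [{}b ->]] := cons_eta b.
rewrite unif_cubeS.
rewrite (_ : _ @^-1` _ = `[a0, b0]%classic `*` box a b); last first.
  apply/seteqP; split => -[x t] /= h.
    split; last by move=> i; have := h (lift ord0 i); rewrite !tnthS.
    by have := h ord0; rewrite !tnth0 /= in_itv.
  move=> i; case: (unliftP ord0 i) => [j ->|->]; first by rewrite !tnthS; exact: h.2.
  by rewrite !tnth0; have := h.1; rewrite /= in_itv.
rewrite [LHS]product_measure1E//; last exact: measurable_box.
transitivity (unif01 `[a0, b0]%classic * unif_cube n (box a b)); first by [].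
rewrite IH big_ord_recl !tnth0 -[unif01 _]probability_fineK// -EFinM.
by congr (_ * _)%:E; apply: eq_bigr => i _; rewrite !tnthS.
Qed.

Lemma unif_cube_box_le n (a b : n.-tuple R) :
  unif_cube n (box a b) <= (box_vol a b)%:E.
Proof.
rewrite unif_cube_box lee_fin /box_vol; apply: ler_prod => i _.
have /andP[-> _] := fine_probability_ge0_le1 unif01 (measurable_itv `[tnth a i, tnth b i]).
by rewrite -lee_fin probability_fineK// unif01_itv_le.
Qed.

End uniform_cube.

Lemma abs_continuous_box_le (R : realType) n (mu : probability (n.-tuple R) R) :
  (forall a b, (mu (box a b) <= (box_vol a b)%:E)%E) -> abs_continuous mu.
Proof.
move=> mu_box N mN N0; apply/eqP; rewrite eq_le measure_ge0 andbT.
apply/lee_addgt0Pr => e e0; rewrite add0e.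
have [a [b [Nab vol_ab]]] := N0 e e0; apply: le_trans vol_ab.
apply: le_trans (measure_sigma_subadditive _ (fun k => measurable_box (a k) (b k)) mN Nab) _.
by apply: lee_nneseries => k *; [exact: measure_ge0 | exact: mu_box].
Qed.

Section convex_geometry.
Variables (R : realType) (d : nat).
Implicit Types (C : set (d.-tuple R)) (s x : d.-tuple R).

Definition cube_vertex s := forall i, tnth s i = 0 \/ tnth s i = 1.

Definition unit_cube : set (d.-tuple R) := box [tuple 0 | _ < d] [tuple 1 | _ < d].

Definition set_coord x (j : 'I_d) (v : R) : d.-tuple R :=
  [tuple if i == j then v else tnth x i | i < d].

Lemma convex_set_coord C x j : convex_tuple_set C -> 0 <= tnth x j <= 1 ->
  C (set_coord x j 0) -> C (set_coord x j 1) -> C x.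
Proof.
move=> convC xj01 C0 C1; have := convC _ _ _ C0 C1 xj01.
congr C; apply: eq_from_tnth => i; rewrite !tnth_mktuple.
by case: eqP => [->|_]; rewrite ?mulr0 ?mulr1 ?add0r// -mulrDl subrK mul1r.
Qed.

Lemma convex_unit_cube_sub C : convex_tuple_set C ->
  (forall s, cube_vertex s -> C s) -> unit_cube `<=` C.
Proof.
move=> convC Cvertex.
suff sub j x : (forall i, 0 <= tnth x i <= 1) ->
    (forall i : 'I_d, (j <= i)%N -> tnth x i = 0 \/ tnth x i = 1) -> C x.
  move=> x x01; apply: (sub d) => [i|i]; last by rewrite leqNgt ltn_ord.
  by have := x01 i; rewrite !tnth_mktuple.
elim: j x => [|j IH] x x01 x_vertex; first by apply: Cvertex => i; exact: x_vertex.
have [jd|dj] := ltnP j d; last first.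
  by apply: IH => // i ji; move: (ltn_ord i); rewrite ltnNge (leq_trans dj ji).
pose j' := Ordinal jd.
have C_set_coord v : v = 0 \/ v = 1 -> C (set_coord x j' v).
  move=> v01; apply: IH => i; rewrite tnth_mktuple.
    by case: eqP => // _; case: v01 => ->; rewrite lexx ler01.
  case: eqP => // ij ji; apply: x_vertex; rewrite ltn_neqAle ji andbT.
  by apply/eqP => ji'; apply: ij; apply: val_inj; rewrite /= ji'.
by apply: (convex_set_coord (j := j')) => //; apply: C_set_coord; [left|right].
Qed.

Definition point_reflection s x : d.-tuple R := [tuple 2 * tnth s i - tnth x i | i < d].

Lemma measurable_point_reflection s : measurable_fun setT (point_reflection s).
Proof.
apply/measurable_fun_tnthP => i.
rewrite (_ : _ \o _ = fun x => 2 * tnth s i - tnth x i).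
  by apply: measurable_funB => //; exact: measurable_tnth.
by apply/funext => x /=; rewrite tnth_mktuple.
Qed.

Lemma convex_reflection_disjoint C s : convex_tuple_set C -> ~ C s ->
  C `&` point_reflection s @^-1` C = set0.
Proof.
move=> convC Cs; apply/seteqP; split => // x [Cx Crx]; apply: Cs.
have := convC _ _ (1 / 2) Cx Crx.
rewrite divr_ge0 ?ler01// ler_pdivrMr ?mul1r ?ltr0n// ler1n => /(_ isT).
by congr C; apply: eq_from_tnth => i; rewrite !tnth_mktuple; field.
Qed.

End convex_geometry.

Lemma unif_cube_unit_cube (R : realType) d : unif_cube R d (@unit_cube R d) = 1%E.
Proof.
rewrite unif_cube_box big1// => i _.
by rewrite !tnth_mktuple unif01_unit_itv.
Qed.

Lemma convex_unif_cube_lt1_vertex (R : realType) d (C : set (d.-tuple R)) :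
  measurable C -> convex_tuple_set C -> (unif_cube R d C < 1)%E ->
  exists s, cube_vertex s /\ ~ C s.
Proof.
move=> mC convC C_lt1; apply: contrapT => no_vertex.
have cube_sub : @unit_cube R d `<=` C.
  apply: convex_unit_cube_sub => // s s01; apply: contrapT => Cs.
  by apply: no_vertex; exists s.
have : (unif_cube R d (@unit_cube R d) <= unif_cube R d C)%E.
  by apply: le_measure; rewrite ?inE//; exact: measurable_box.
by rewrite unif_cube_unit_cube leNgt C_lt1.
Qed.

Section lattice.
Variables (R : realType) (d m : nat).
Local Notation K := {ffun 'I_d -> 'I_m.+1}.
Implicit Types (k : K) (s : d.-tuple R).

Definition lattice_point k : d.-tuple R := [tuple 2 * (k i)%:R - m%:R | i < d].

Definition translate2 s (c : d.-tuple R) : d.-tuple R :=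
  [tuple tnth c i + 2 * tnth s i | i < d].

Definition lattice_rev k : K := [ffun i => rev_ord (k i)].

Definition lattice_step s k : K := [ffun i => if tnth s i == 1 then ordS (k i) else k i].

Definition lattice_interior : pred K := [pred k | k \in ffun_on (predC1 ord_max)].

Lemma lattice_rev_inj : injective lattice_rev.
Proof.
by apply: (can_inj (g := lattice_rev)) => k; apply/ffunP => i; rewrite !ffunE rev_ordK.
Qed.

Lemma lattice_step_inj s : injective (lattice_step s).
Proof.
move=> k1 k2 /ffunP eq_k; apply/ffunP => i; have := eq_k i; rewrite !ffunE.
by case: ifP => // _; exact: ordS_inj.
Qed.

Lemma card_lattice_interior : #|lattice_interior| = (m ^ d)%N.
Proof.
by rewrite (eq_card (B := ffun_on (predC1 ord_max)))// card_ffun_on cardC1 !card_ord.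
Qed.

Lemma point_reflection_lattice_rev s k :
  point_reflection s (lattice_point (lattice_rev k)) = translate2 s (lattice_point k).
Proof.
apply: eq_from_tnth => i; rewrite !tnth_mktuple ffunE /= subSS natrB; last first.
  by rewrite -ltnS.
ring.
Qed.

Lemma lattice_point_step s k : cube_vertex s -> lattice_interior k ->
  lattice_point (lattice_step s k) = translate2 s (lattice_point k).
Proof.
move=> s01 /ffun_onP k_int; apply: eq_from_tnth => i; rewrite !tnth_mktuple ffunE.
have := k_int i; rewrite !inE => ki.
case: (s01 i) => ->; first by rewrite eq_sym (negbTE (oner_neq0 R)) mulr0 addr0.
rewrite eqxx /= modn_small; last by rewrite ltnS ltn_neqAle ki -ltnS ltn_ord.
by rewrite -addn1 natrD; ring.
Qed.

(* The reflection of the lattice {-m, -m+2, ..., m}^d through a vertex s of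
   the unit cube is its translate by 2s, which shares at least m^d points
   with the lattice. *)
Lemma lattice_reflection_sum (F : d.-tuple R -> R) s :
  cube_vertex s -> (forall c, 0 <= F c <= 1) ->
  \sum_k F (lattice_point k) - ((m.+1 ^ d)%:R - (m ^ d)%:R) <=
  \sum_k F (point_reflection s (lattice_point k)).
Proof.
move=> s01 F01.
have F_ge0 c : 0 <= F c by case/andP: (F01 c).
have -> : \sum_k F (point_reflection s (lattice_point k)) =
    \sum_k F (translate2 s (lattice_point k)).
  rewrite (reindex_inj lattice_rev_inj); apply: eq_bigr => k _.
  by rewrite point_reflection_lattice_rev.
rewrite [X in X - _](reindex_inj (@lattice_step_inj s)) /=.
rewrite (bigID lattice_interior) [X in _ <= X](bigID lattice_interior) /=.
rewrite (eq_bigr _ (fun k k_int => congr1 F (lattice_point_step s01 k_int))).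
have bad_le : \sum_(k | ~~ lattice_interior k) F (lattice_point (lattice_step s k)) <=
    (m.+1 ^ d)%:R - (m ^ d)%:R.
  apply: le_trans (_ : \sum_(k | ~~ lattice_interior k) (1 : R) <= _).
    by apply: ler_sum => k _; case/andP: (F01 (lattice_point (lattice_step s k))).
  rewrite sumr_const -card_lattice_interior.
  have := cardC lattice_interior; rewrite card_ffun !card_ord addnC => <-.
  by rewrite natrD addrK.
have bad_ge0 : 0 <= \sum_(k | ~~ lattice_interior k) F (translate2 s (lattice_point k)).
  exact: sumr_ge0.
lra.
Qed.

End lattice.

Section symmetric_cube.
Variables (R : realType) (d : nat).
Implicit Types (b : bool) (c s x : d.-tuple R).

Definition pm_shift b c x : d.-tuple R :=
  [tuple (if b then tnth x i else - tnth x i) + tnth c i | i < d].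

Lemma measurable_pm_shift b c : measurable_fun setT (pm_shift b c).
Proof.
apply/measurable_fun_tnthP => i.
rewrite (_ : _ \o _ = fun x => (if b then tnth x i else - tnth x i) + tnth c i).
  by apply: measurable_funD => //; case: b; [|apply: measurable_funN];
    exact: measurable_tnth.
by apply/funext => x /=; rewrite tnth_mktuple.
Qed.

Lemma pm_shift_preimage_box b c (a e : d.-tuple R) : exists a' e',
  pm_shift b c @^-1` box a e = box a' e' /\ box_vol a' e' = box_vol a e.
Proof.
pose lo i := if b then tnth a i - tnth c i else tnth c i - tnth e i.
pose hi i := if b then tnth e i - tnth c i else tnth c i - tnth a i.
exists [tuple lo i | i < d], [tuple hi i | i < d]; split.
  apply/seteqP; split => x /= x_box i; move: {x_box}(x_box i);
  by rewrite !tnth_mktuple /lo /hi {lo hi}; case: b => /andP[h1 h2]; apply/andP; split; lra.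
rewrite /box_vol; apply: eq_bigr => i _; rewrite !tnth_mktuple /lo /hi {lo hi}.
by congr (Num.max _ _); case: b; lra.
Qed.

Lemma point_reflection_pm_shift s b c x :
  point_reflection s (pm_shift b c x) = pm_shift (~~ b) (point_reflection s c) x.
Proof. by apply: eq_from_tnth => i; rewrite !tnth_mktuple; case: b => /=; ring. Qed.

Definition sym_cube c : probability (d.-tuple R) R :=
  uniform_mixture (fun b => pushforward_prob (unif_cube R d) (measurable_pm_shift b c)) true.

Lemma sym_cube_box_le c (a e : d.-tuple R) :
  (sym_cube c (box a e) <= (box_vol a e)%:E)%E.
Proof.
apply: uniform_mixture_le; first exact: measurable_box.
move=> b; rewrite pushforward_probE.
have [a' [e' [-> <-]]] := pm_shift_preimage_box b c a e.
exact: unif_cube_box_le.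
Qed.

Lemma sym_cube_reflection s c (C : set (d.-tuple R)) :
  sym_cube c (point_reflection s @^-1` C) = sym_cube (point_reflection s c) C.
Proof.
have preimage_pm_shift b : pm_shift b c @^-1` (point_reflection s @^-1` C) =
    pm_shift (~~ b) (point_reflection s c) @^-1` C.
  by congr (_ @^-1` C); apply/funext => x; rewrite /= point_reflection_pm_shift.
rewrite /sym_cube /uniform_mixture /=; congr (_ * _)%E.
rewrite [RHS](reindex_inj negb_inj) /=.
by apply: eq_bigr => b _; exact: (congr1 (unif_cube R d) (preimage_pm_shift b)).
Qed.

End symmetric_cube.

Section lattice_cubes.
Variables (R : realType) (d m : nat).
Local Notation K := {ffun 'I_d -> 'I_m.+1}.

Definition lattice_cubes : probability (d.-tuple R) R :=
  uniform_mixture (fun k : K => sym_cube (lattice_point R k)) [ffun=> ord0].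

Lemma abs_continuous_lattice_cubes : abs_continuous lattice_cubes.
Proof.
apply: abs_continuous_box_le => a e.
apply: uniform_mixture_le => [|k]; [exact: measurable_box | exact: sym_cube_box_le].
Qed.

Lemma lattice_cubes_convex_le (C : set (d.-tuple R)) s :
  measurable C -> convex_tuple_set C -> cube_vertex s -> ~ C s ->
  fine (lattice_cubes C) <= 1 - (m%:R / m.+1%:R) ^+ d / 2.
Proof.
move=> mC convC s01 Cs.
pose D := point_reflection s @^-1` C.
have mD : measurable D.
  by rewrite /D -[X in measurable X]setTI; exact: measurable_point_reflection.
pose F c := fine (sym_cube c C).
have F01 c : 0 <= F c <= 1 by exact: fine_probability_ge0_le1.
have CD_le1 : fine (lattice_cubes C) + fine (lattice_cubes D) <= 1.
  rewrite -lee_fin EFinD !probability_fineK// -measureU//.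
    by apply: probability_le1; exact: measurableU.
  exact: convex_reflection_disjoint.
have CE : fine (lattice_cubes C) =
    (m.+1 ^ d)%:R^-1 * \sum_(k : K) F (lattice_point R k).
  by rewrite uniform_mixture_fineE// card_ffun !card_ord natrX.
have DE : fine (lattice_cubes D) =
    (m.+1 ^ d)%:R^-1 * \sum_(k : K) F (point_reflection s (lattice_point R k)).
  rewrite uniform_mixture_fineE//= card_ffun !card_ord natrX.
  by congr (_ * _); apply: eq_bigr => k _; rewrite /F -sym_cube_reflection.
have DC_ge : fine (lattice_cubes C) - (1 - (m%:R / m.+1%:R) ^+ d) <=
    fine (lattice_cubes D).
  have Minv_gt0 : 0 < (m.+1 ^ d)%:R^-1 :> R by rewrite invr_gt0 ltr0n expn_gt0.
  have := lattice_reflection_sum m s01 F01.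
  rewrite -(ler_pM2l Minv_gt0) mulrBr mulrBr mulVf ?gt_eqF ?ltr0n ?expn_gt0//.
  by rewrite -CE -DE expr_div_n -!natrX [_ / _]mulrC.
lra.
Qed.
End lattice_cubes.

Unset Implicit Arguments.

Theorem mainTheorem7 (R : realType) (d : nat) (alpha : R) :
  (0 < d)%N -> 1 / 2 < alpha -> alpha < 1 ->
  exists mu1 mu2 : probability (d.-tuple R) R,
    abs_continuous mu1 /\ abs_continuous mu2 /\
    ~ (exists C : set (d.-tuple R),
         measurable C /\ convex_tuple_set C /\
         mu1 C = alpha%:E /\ mu2 C = alpha%:E).
Proof.
move=> _ half_lt_alpha alpha_lt1.
have e_gt0 : 0 < 2 * alpha - 1 by lra.
have [m ratio_gt] := exists_ratio_expn_gt d e_gt0.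
exists (unif_cube R d), (lattice_cubes R d m); split.
  by apply: abs_continuous_box_le => a b; exact: unif_cube_box_le.
split; first exact: abs_continuous_lattice_cubes.
move=> [C [mC [convC [unif_C lattice_C]]]].
have [s [s01 Cs]] : exists s, cube_vertex s /\ ~ C s.
  by apply: convex_unif_cube_lt1_vertex => //; rewrite unif_C lte_fin.
have := lattice_cubes_convex_le m mC convC s01 Cs.
by rewrite lattice_C /=; lra.
Qed.
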